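(* Let $L \geq 1$, $m = L+1$, $\gamma = (L+1)^3$, and for $i \in \{0,\ldots,L\}$ and $k \in [m]$ define $$w_i(k) = \gamma^{2(i+1)k - k^2 + 1} + \sum_{r=0}^L \gamma^{(2r+1)(i+1) - r^2 - r}, \qquad \pi_i(A_k) = \frac{w_i(k)}{\sum_{h=1}^m w_i(h)}.$$ Then for every $i \in \{0,\ldots,L\}$, $\pi_i(A_{i+1}) > 1 - \frac{1}{L+1}$, and for every $k \in [m]$ with $k \neq i+1$, $\frac{1}{2(L+1)^3} < \pi_i(A_k) < \frac{1}{(L+1)^2}$.
   Context: These numbers are the masses of the modes $A_k$ at level $i$ in the paper's construction of a multimodal target (with cross terms between well-separated modes neglected); here they are simply defined by the displayed formula. *)

From HB Require Import structures.
From mathcomp Require Import all_boot all_order all_algebra.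
Set Implicit Arguments. Unset Strict Implicit. Unset Printing Implicit Defensive.
Import Order.TTheory GRing.Theory Num.Theory.
Local Open Scope ring_scope.

Definition gam (R : realFieldType) (L : nat) : R := ((L.+1 ^ 3)%N)%:R.

Definition wgt (R : realFieldType) (L i k : nat) : R :=
  gam R L ^ (2%:Z * (i%:Z + 1) * k%:Z - k%:Z ^+ 2 + 1)
  + \sum_(0 <= r < L.+1)
      gam R L ^ ((2%:Z * r%:Z + 1) * (i%:Z + 1) - r%:Z ^+ 2 - r%:Z).

Definition piA (R : realFieldType) (L i k : nat) : R :=
  wgt R L i k / \sum_(1 <= h < L.+2) wgt R L i h.

From HB Require Import structures.
From mathcomp Require Import all_boot all_order all_algebra.
From mathcomp Require Import zify ring lra.
Set Implicit Arguments. Unset Strict Implicit. Unset Printing Implicit Defensive.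
Import Order.TTheory GRing.Theory Num.Theory.
Local Open Scope ring_scope.

(* Write N = L+1, so gamma = N^3, and P = gamma^((i+1)^2).  Completing the
   square, the peak exponent of A_k is (i+1)^2 + 1 - (k-i-1)^2 and the r-th
   exponent of the common sum S is (i+1)^2 - (r-i)(r-i-1).  Hence the peak of
   the mode A_(i+1) is gamma P = N^3 P, every other peak lies in (0, P], and
   P <= S <= N P.  The normalising sum is N^3 P + Y + N S, where Y <= N P
   collects the other peaks, so the three bounds become polynomial
   inequalities in N, P, S and Y. *)

Section FractionBounds.
Variable R : realFieldType.

Lemma ltr_pdiv_cross (a b c d : R) :
  0 < b -> 0 < d -> (a / b < c / d) = (a * d < c * b).
Proof. by move=> b0 d0; rewrite ltr_pdivrMr // mulrAC ltr_pdivlMr. Qed.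

Lemma ler_sum_term (I : eqType) (F : I -> R) (P : pred I) (r : seq I) j :
  uniq r -> j \in r -> P j -> (forall x, 0 <= F x) ->
  F j <= \sum_(x <- r | P x) F x.
Proof.
move=> ur jr Pj F0; rewrite -big_filter (bigD1_seq j) ?mem_filter ?Pj ?filter_uniq //=.
by rewrite lerDl sumr_ge0.
Qed.

Lemma dominant_share_gt (N P S Y : R) :
  2 <= N -> 0 < P -> P <= S -> S <= N * P -> 0 <= Y <= N * P ->
  1 - 1 / N < (N ^+ 3 * P + S) / (N ^+ 3 * P + Y + N * S).
Proof.
move=> N_ge2 P_gt0 P_le_S S_le_NP /andP[Y_ge0 Y_le].
have -> : 1 - 1 / N = (N - 1) / N.
  by field; rewrite gt_eqF //; lra.
rewrite ltr_pdiv_cross; [|lra|nra].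
have Y_bound : (N - 1) * Y <= (N - 1) * (N * P) by rewrite ler_wpM2l //; lra.
have S_bound : (N * N - 2 * N) * S <= (N * N - 2 * N) * (N * P).
  by rewrite ler_wpM2l //; nra.
have slack : 0 < (N * N + N) * P by rewrite mulr_gt0 //; nra.
nra.
Qed.

Lemma minor_share_gt (N P S a Y : R) :
  2 <= N -> 0 < P -> P <= S -> S <= N * P -> 0 <= a -> 0 <= Y <= N * P ->
  1 / (2 * N ^+ 3) < (a + S) / (N ^+ 3 * P + Y + N * S).
Proof.
move=> N_ge2 P_gt0 P_le_S S_le_NP a_ge0 /andP[Y_ge0 Y_le].
rewrite ltr_pdiv_cross; [|nra|nra].
have N3_gt0 : 0 < N ^+ 3 by rewrite exprn_gt0 //; lra.
have NS_bound : N * S <= N * (N * P) by rewrite ler_wpM2l //; lra.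
have N3S_bound : N ^+ 3 * P <= N ^+ 3 * S by rewrite ler_wpM2l //; lra.
have N3a_ge0 : 0 <= N ^+ 3 * a by rewrite mulr_ge0 //; lra.
have slack : (N * N + N) * P < N ^+ 3 * P.
  by rewrite ltr_pM2r //; nra.
nra.
Qed.

Lemma minor_share_lt (N P S a Y : R) :
  2 <= N -> 0 < P -> P <= S -> S <= N * P -> 0 < a <= P -> a <= Y ->
  (a + S) / (N ^+ 3 * P + Y + N * S) < 1 / N ^+ 2.
Proof.
move=> N_ge2 P_gt0 P_le_S S_le_NP /andP[a_gt0 a_le] a_le_Y.
rewrite ltr_pdiv_cross; [|nra|nra].
have a_bound : N ^+ 2 * a <= N ^+ 2 * P by rewrite ler_wpM2l // exprn_ge0 //; lra.
have S_bound : (N * N - N) * S <= (N * N - N) * (N * P).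
  by rewrite ler_wpM2l //; nra.
nra.
Qed.

End FractionBounds.

Definition peak_exp (i k : nat) : int := 2%:Z * (i%:Z + 1) * k%:Z - k%:Z ^+ 2 + 1.
Definition base_exp (i r : nat) : int :=
  (2%:Z * r%:Z + 1) * (i%:Z + 1) - r%:Z ^+ 2 - r%:Z.
Definition top_exp (i : nat) : int := (i%:Z + 1) ^+ 2.

Lemma peak_exp_mode i : peak_exp i i.+1 = top_exp i + 1.
Proof. by rewrite /peak_exp /top_exp !expr2; lia. Qed.

Lemma peak_exp_le i k : k != i.+1 -> peak_exp i k <= top_exp i.
Proof.
rewrite /peak_exp /top_exp !expr2 => k_neq.
have [k_lt|k_gt] : (k < i.+1)%N \/ (i.+1 < k)%N by lia.
all: nia.
Qed.

Lemma base_exp_le i r : base_exp i r <= top_exp i.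
Proof.
rewrite /base_exp /top_exp !expr2.
have [r_le|r_gt] : (r <= i)%N \/ (i < r)%N by lia.
all: nia.
Qed.

Lemma base_exp_diag i : base_exp i i = top_exp i.
Proof. by rewrite /base_exp /top_exp !expr2; lia. Qed.

Section Weights.
Variables (R : realFieldType) (L i : nat).

Local Notation g := (gam R L).
Local Notation N := ((L.+1)%:R : R).

Definition base_mass : R := \sum_(0 <= r < L.+1) g ^ base_exp i r.
Definition off_peak_mass : R := \sum_(1 <= h < L.+2 | h != i.+1) g ^ peak_exp i h.

Lemma wgtE k : wgt R L i k = g ^ peak_exp i k + base_mass.
Proof. by []. Qed.

Lemma gamE : g = N ^+ 3.
Proof. by rewrite /gam natrX. Qed.

Lemma gam_ge1 : 1 <= g.
Proof. by rewrite /gam ler1n expn_gt0. Qed.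

Lemma gam_gt0 : 0 < g.
Proof. exact: lt_le_trans ltr01 gam_ge1. Qed.

Lemma gam_exprz_gt0 (z : int) : 0 < g ^ z.
Proof. exact: exprz_gt0 gam_gt0. Qed.

Lemma peak_mode : g ^ peak_exp i i.+1 = N ^+ 3 * g ^ top_exp i.
Proof.
rewrite peak_exp_mode expfzDr ?gt_eqF ?gam_gt0 //.
by rewrite expr1z mulrC gamE.
Qed.

Lemma peak_le k : k != i.+1 -> g ^ peak_exp i k <= g ^ top_exp i.
Proof.
by move=> k_neq; apply: ler_weXz2l; [exact: gam_ge1 | exact: peak_exp_le].
Qed.

Lemma top_le_base_mass : (i <= L)%N -> g ^ top_exp i <= base_mass.
Proof.
move=> i_le; rewrite -base_exp_diag /base_mass.
apply: (ler_sum_term (F := fun r => g ^ base_exp i r) (iota_uniq 0 L.+1)) => // [|r].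
  by rewrite mem_iota; lia.
exact/ltW/gam_exprz_gt0.
Qed.

Lemma base_le : base_mass <= N * g ^ top_exp i.
Proof.
apply: (@le_trans _ _ (\sum_(0 <= r < L.+1) g ^ top_exp i)).
  by apply: ler_sum_nat => r _; apply: ler_weXz2l; [exact: gam_ge1 | exact: base_exp_le].
by rewrite sumr_const_nat subn0 mulr_natl.
Qed.

Lemma off_mass_le : off_peak_mass <= N * g ^ top_exp i.
Proof.
apply: (@le_trans _ _ (\sum_(1 <= h < L.+2) g ^ top_exp i)).
  rewrite /off_peak_mass big_mkcond /=; apply: ler_sum_nat => h _.
  by case: ifP => [/peak_le // | _]; exact/ltW/gam_exprz_gt0.
by rewrite sumr_const_nat subSS subn0 mulr_natl.
Qed.

Lemma peak_le_off_mass k :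
  (1 <= k <= L.+1)%N -> k != i.+1 -> g ^ peak_exp i k <= off_peak_mass.
Proof.
move=> k_range k_neq.
apply: (ler_sum_term (F := fun h => g ^ peak_exp i h) (iota_uniq 1 L.+1)) => // [|h].
  by rewrite mem_iota; lia.
exact/ltW/gam_exprz_gt0.
Qed.

Lemma sum_wgtE : (i <= L)%N ->
  \sum_(1 <= h < L.+2) wgt R L i h = N ^+ 3 * g ^ top_exp i + off_peak_mass + N * base_mass.
Proof.
move=> i_le; under eq_bigr => h _ do rewrite wgtE.
rewrite big_split /= (bigD1_seq i.+1) /=; last exact: (iota_uniq 1 L.+1).
  by rewrite peak_mode sumr_const_nat subSS subn0 mulr_natl.
by rewrite mem_index_iota; lia.
Qed.

End Weights.

Theorem lemma11 (R : realFieldType) (L : nat) (hL : (1 <= L)%N) :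
  forall i : nat, (i <= L)%N ->
    1 - 1 / (L.+1)%:R < piA R L i i.+1 /\
    (forall k : nat, (1 <= k <= L.+1)%N -> k != i.+1 ->
       1 / (2 * (L.+1)%:R ^+ 3) < piA R L i k /\
       piA R L i k < 1 / (L.+1)%:R ^+ 2).
Proof.
move=> i i_le.
have N_ge2 : 2 <= (L.+1)%:R :> R by rewrite ler_nat; lia.
have P_gt0 := gam_exprz_gt0 R L (top_exp i).
have P_le_S := top_le_base_mass R i_le.
have S_le := base_le R L i.
have Y_le := off_mass_le R L i.
have Y_ge0 : 0 <= off_peak_mass R L i.
  by apply: sumr_ge0 => h _; exact/ltW/gam_exprz_gt0.
rewrite /piA sum_wgtE //; split.
  by rewrite wgtE peak_mode; apply: dominant_share_gt; rewrite ?Y_ge0.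
move=> k k_range k_neq; rewrite wgtE; split.
  by apply: minor_share_gt; rewrite ?Y_ge0 // ltW ?gam_exprz_gt0.
apply: minor_share_lt; rewrite ?gam_exprz_gt0 ?peak_le //.
exact: peak_le_off_mass.
Qed.
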